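(* Let $(S,\gamma)$ be a $C^\infty$ surface with boundary in $\mathbf{R}^3$. Suppose the dual-boundary $\widehat\gamma(t)$ is of type $(1,2,2+r)$ at $t=t_1$ for some positive integer $r$. Then the distance $d=\mathrm{dist}(\gamma(t_1),\widehat\gamma^*(t_1))$ is given by $$d=\left|\frac{\kappa_2\sqrt{\kappa_2^2+\kappa_3^2}}{\kappa_2(\kappa_3'+\kappa_1\kappa_2)+\kappa_3(-\kappa_2'+\kappa_1\kappa_3)}\right|$$ at $t=t_1$.
   Context: $S\subset\mathbf{R}^3$ is a co-oriented immersed $C^\infty$ surface with boundary curve $\gamma(t)$ parametrised by arc length; primes denote $d/dt$. Adapted frame: $\boldsymbol e_1=\gamma'$, $\boldsymbol e_3=\boldsymbol n$ the unit normal, $\boldsymbol e_2=\boldsymbol e_3\times\boldsymbol e_1$; $\kappa_1,\kappa_2,\kappa_3$ are defined by $\boldsymbol e_1'=\kappa_1\boldsymbol e_2+\kappa_2\boldsymbol e_3$, $\boldsymbol e_2'=-\kappa_1\boldsymbol e_1+\kappa_3\boldsymbol e_3$, $\boldsymbol e_3'=-\kappa_2\boldsymbol e_1-\kappa_3\boldsymbol e_2$. The dual-boundary is $\widehat\gamma(t)=[-\gamma(t)\cdot\boldsymbol n(t):\boldsymbol n(t)]\in\mathbf{R}P^{3*}$, the tangent plane $T_{\gamma(t)}S$ viewed in the dual projective space. Its type at $t_1$ is $(a_1,a_2,a_3)$ with $a_i=\min\{m:\mathrm{rank}(\widehat\gamma'(t_1),\dots,\widehat\gamma^{(m)}(t_1))=i\}$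 in affine coordinates. $\widehat\gamma^*(t_1)\in\mathbf{R}P^3$ is the osculating plane of $\widehat\gamma$ at $t_1$ viewed as a point of $\mathbf{R}P^3$; when it lies in $\mathbf{R}^3$ it is the point $x$ solving $x\cdot\boldsymbol n=\gamma\cdot\boldsymbol n$, $x\cdot\boldsymbol n'=(\gamma\cdot\boldsymbol n)'$, $x\cdot\boldsymbol n''=(\gamma\cdot\boldsymbol n)''$ at $t_1$. (If the denominator vanishes, $\widehat\gamma^*(t_1)$ is at infinity.) *)

From HB Require Import structures.
From mathcomp Require Import all_boot all_order all_algebra.
From mathcomp Require Import all_classical all_reals all_analysis.
Set Implicit Arguments. Unset Strict Implicit. Unset Printing Implicit Defensive.
Import Order.TTheory GRing.Theory Num.Theory.
Local Open Scope ring_scope.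

Section Defs.
Variable R : realType.

Definition dot3 (u v : 'rV[R]_3) : R := \sum_(i < 3) u ord0 i * v ord0 i.

Definition cross3 (u v : 'rV[R]_3) : 'rV[R]_3 :=
  \row_(i < 3)
    (u ord0 (inord ((i + 1) %% 3)) * v ord0 (inord ((i + 2) %% 3))
     - u ord0 (inord ((i + 2) %% 3)) * v ord0 (inord ((i + 1) %% 3))).

Definition dist3 (u v : 'rV[R]_3) : R := Num.sqrt (dot3 (u - v) (u - v)).

Definition smooth_fun (n : nat) (f : R -> 'rV[R]_n) : Prop :=
  forall (k : nat) (t : R), derivable (derive1n k f) t 1.

Definition e1 (gamma : R -> 'rV[R]_3) : R -> 'rV[R]_3 := derive1 gamma.
Definition e3 (nn : R -> 'rV[R]_3) : R -> 'rV[R]_3 := nn.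
Definition e2 (gamma nn : R -> 'rV[R]_3) : R -> 'rV[R]_3 :=
  fun t => cross3 (e3 nn t) (e1 gamma t).

(* kappa_1, kappa_2, kappa_3 : the coefficients in
   e1' = k1 e2 + k2 e3, e2' = -k1 e1 + k3 e3, e3' = -k2 e1 - k3 e2 *)
Definition kappa1 gamma nn (t : R) : R := dot3 (derive1 (e1 gamma) t) (e2 gamma nn t).
Definition kappa2 gamma nn (t : R) : R := dot3 (derive1 (e1 gamma) t) (e3 nn t).
Definition kappa3 gamma nn (t : R) : R := dot3 (derive1 (e2 gamma nn) t) (e3 nn t).

(* homogeneous coordinates of the dual-boundary [-gamma.n : n] in RP^3* *)
Definition dual_boundary_hom (gamma nn : R -> 'rV[R]_3) (t : R) : 'rV[R]_4 :=
  \row_(i < 4)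
    (if (i == ord0 :> 'I_4) then - dot3 (gamma t) (nn t)
     else nn t ord0 (inord i.-1)).

Definition dual_boundary_affine (gamma nn : R -> 'rV[R]_3) (j : 'I_4) (t : R)
  : 'rV[R]_3 :=
  \row_(c < 3) (dual_boundary_hom gamma nn t ord0 (lift j c)
                / dual_boundary_hom gamma nn t ord0 j).

Definition deriv_rank (phi : R -> 'rV[R]_3) (t1 : R) (m : nat) : nat :=
  \rank (\matrix_(k < m, c < 3) (derive1n k.+1 phi t1) ord0 c).

Definition type_index (phi : R -> 'rV[R]_3) (t1 : R) (i a : nat) : Prop :=
  deriv_rank phi t1 a = i /\ forall m, (m < a)%N -> deriv_rank phi t1 m <> i.

Definition curve_type (phi : R -> 'rV[R]_3) (t1 : R) (a1 a2 a3 : nat) : Prop :=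
  type_index phi t1 1 a1 /\ type_index phi t1 2 a2 /\ type_index phi t1 3 a3.

Definition dual_boundary_type (gamma nn : R -> 'rV[R]_3) (t1 : R) (a1 a2 a3 : nat)
  : Prop :=
  exists j : 'I_4, dual_boundary_hom gamma nn t1 ord0 j != 0 /\
    curve_type (dual_boundary_affine gamma nn j) t1 a1 a2 a3.

(* x in R^3 is the (finite) point hat-gamma^*(t1): the osculating plane of the
   dual-boundary at t1 viewed as a point of RP^3 *)
Definition dual_osc_point (gamma nn : R -> 'rV[R]_3) (t1 : R) (x : 'rV[R]_3) : Prop :=
  let g := fun t => dot3 (gamma t) (nn t) in
  [/\ dot3 x (nn t1) = g t1,
      dot3 x (derive1 nn t1) = derive1 g t1 &
      dot3 x (derive1n 2 nn t1) = derive1n 2 g t1].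

End Defs.

From HB Require Import structures.
From mathcomp Require Import all_boot all_order all_algebra.
From mathcomp Require Import all_classical all_reals all_analysis.
From mathcomp Require Import ring lra.
Set Implicit Arguments. Unset Strict Implicit.
Import Order.TTheory GRing.Theory Num.Theory.
Import numFieldNormedType.Exports.
Local Open Scope ring_scope.

(* In homogeneous coordinates the dual-boundary is h = [-gamma.n : n], and its
   type (1, 2, ...) at t1 only matters through a_2 = 2: in an affine chart the
   first two derivatives are independent, hence so are h, h', h'' at t1.
   With y = x - gamma(t1), the equations of the osculating point reduce, using
   gamma'.n = 0, to y.n = y.n' = 0 and y.n'' = -kappa2. So y = (y.e1) e1 + (y.e2) e2,
   and since n' = -kappa2 e1 - kappa3 e2, the pair (y.e1, y.e2) solves a 2x2 linear
   system of determinant D; Cramer's rule gives |y|. If D were 0, a nontrivial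
   relation among n, n', n'' would exist; dotting it with x shows that the same
   relation holds for the first coordinates of h, h', h'', a contradiction. *)

Definition i0 : 'I_3 := @Ordinal 3 0 isT.
Definition i1 : 'I_3 := @Ordinal 3 1 isT.
Definition i2 : 'I_3 := @Ordinal 3 2 isT.

Lemma ord3P (i : 'I_3) : [\/ i = i0, i = i1 | i = i2].
Proof.
by case: i => [[|[|[|k]]] lti] //; [constructor 1|constructor 2|constructor 3];
  apply/val_inj.
Qed.

Section Coordinates3.
Variable R : realType.
Implicit Types (u v : 'rV[R]_3) (k : R).

Lemma dot3E u v :
  dot3 u v = u ord0 i0 * v ord0 i0 + u ord0 i1 * v ord0 i1 + u ord0 i2 * v ord0 i2.
Proof.
rewrite /dot3 !big_ord_recl big_ord0 addr0 addrA.
by congr (_ * _ + _ * _ + _ * _); congr (_ ord0 _); apply/val_inj.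
Qed.

Lemma cross3E0 u v :
  cross3 u v ord0 i0 = u ord0 i1 * v ord0 i2 - u ord0 i2 * v ord0 i1.
Proof.
by rewrite mxE; congr (_ * _ - _ * _); congr (_ ord0 _); apply/val_inj; rewrite /= inordK.
Qed.

Lemma cross3E1 u v :
  cross3 u v ord0 i1 = u ord0 i2 * v ord0 i0 - u ord0 i0 * v ord0 i2.
Proof.
by rewrite mxE; congr (_ * _ - _ * _); congr (_ ord0 _); apply/val_inj; rewrite /= inordK.
Qed.

Lemma cross3E2 u v :
  cross3 u v ord0 i2 = u ord0 i0 * v ord0 i1 - u ord0 i1 * v ord0 i0.
Proof.
by rewrite mxE; congr (_ * _ - _ * _); congr (_ ord0 _); apply/val_inj; rewrite /= inordK.
Qed.

Lemma row3_ext u v :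
  u ord0 i0 = v ord0 i0 -> u ord0 i1 = v ord0 i1 -> u ord0 i2 = v ord0 i2 -> u = v.
Proof.
move=> e0 e1 e2; apply/rowP => i; rewrite (ord1 ord0) in e0 e1 e2 *.
by case: (ord3P i) => ->.
Qed.

Lemma coordD u v i : (u + v) ord0 i = u ord0 i + v ord0 i. Proof. by rewrite mxE. Qed.
Lemma coordN u i : (- u) ord0 i = - u ord0 i. Proof. by rewrite mxE. Qed.
Lemma coordZ u k i : (k *: u) ord0 i = k * u ord0 i. Proof. by rewrite mxE. Qed.
Lemma coord0 i : (0 : 'rV[R]_3) ord0 i = 0. Proof. by rewrite mxE. Qed.

End Coordinates3.

Ltac coords := rewrite ?dot3E;
  do 3 rewrite ?coordD ?coordN ?coordZ ?coord0 ?cross3E0 ?cross3E1 ?cross3E2.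

Section Algebra3.
Variable R : realType.
Implicit Types (u v w a n : 'rV[R]_3) (k : R).

Lemma dot3C u v : dot3 u v = dot3 v u. Proof. by coords; ring. Qed.
Lemma dot3Dl u v w : dot3 (u + v) w = dot3 u w + dot3 v w. Proof. by coords; ring. Qed.
Lemma dot3Dr u v w : dot3 u (v + w) = dot3 u v + dot3 u w. Proof. by coords; ring. Qed.
Lemma dot3Zl k u v : dot3 (k *: u) v = k * dot3 u v. Proof. by coords; ring. Qed.
Lemma dot3Zr k u v : dot3 u (k *: v) = k * dot3 u v. Proof. by coords; ring. Qed.
Lemma dot3Nl u v : dot3 (- u) v = - dot3 u v. Proof. by coords; ring. Qed.
Lemma dot3Nr u v : dot3 u (- v) = - dot3 u v. Proof. by coords; ring. Qed.
Lemma dot3r0 u : dot3 u 0 = 0. Proof. by coords; ring. Qed.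

Lemma dot3Bl u v w : dot3 (u - v) w = dot3 u w - dot3 v w.
Proof. by rewrite dot3Dl dot3Nl. Qed.

Lemma orthonormal_decomposition v a n :
  dot3 a a = 1 -> dot3 n n = 1 -> dot3 n a = 0 ->
  v = dot3 v a *: a + dot3 v (cross3 n a) *: cross3 n a + dot3 v n *: n.
Proof.
move=> a1 n1 na0; apply/eqP; rewrite -subr_eq0.
have -> : v - (dot3 v a *: a + dot3 v (cross3 n a) *: cross3 n a + dot3 v n *: n)
  = (1 - dot3 n n * dot3 a a + dot3 n a ^+ 2) *: v
    + (dot3 v a * (dot3 n n - 1) - dot3 v n * dot3 n a) *: a
    + (dot3 v n * (dot3 a a - 1) - dot3 v a * dot3 n a) *: n.
  by apply: row3_ext; coords; ring.
by rewrite a1 n1 na0 expr0n /= !(subrr, mulr0, mulr1, subr0, scale0r, addr0).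
Qed.

Lemma dot3_cross3_cycle u v w : dot3 u (cross3 v w) = dot3 v (cross3 w u).
Proof. by coords; ring. Qed.

Lemma dot3_cross3_self u v : dot3 u (cross3 u v) = 0.
Proof. by coords; ring. Qed.

Lemma cross3_cross3l u v w : cross3 (cross3 u v) w = dot3 u w *: v - dot3 v w *: u.
Proof. by apply: row3_ext; coords; ring. Qed.

End Algebra3.

Section PointwiseFrame.
Variable R : realType.
(* [a b c] stand for the derivatives of [gamma] of orders 1 to 3, [n m p] for
   [nn] and its first two derivatives, [q] for [gamma] itself and [x] for the
   osculating point, all at one parameter value; the hypotheses are the
   differentiated constraints in the shape the Leibniz rule produces them. *)
Variables (a b c n m p q x : 'rV[R]_3).
Hypotheses (a_unit : dot3 a a = 1) (ab_orth : dot3 a b = 0).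
Hypotheses (n_unit : dot3 n n = 1) (nm_orth : dot3 n m = 0).
Hypotheses (na_orth : dot3 n a = 0) (na_orth' : dot3 m a + dot3 n b = 0)
  (na_orth'' : dot3 p a + dot3 m b + (dot3 m b + dot3 n c) = 0).
Hypotheses (osc_n : dot3 x n = dot3 q n) (osc_m : dot3 x m = dot3 a n + dot3 q m)
  (osc_p : dot3 x p = dot3 b n + dot3 a m + (dot3 a m + dot3 q p)).

Variables k1 k2 k3 k2' k3' : R.
Local Notation e := (cross3 n a).
Hypotheses (k1E : k1 = dot3 b e) (k2E : k2 = dot3 b n)
  (k3E : k3 = dot3 (cross3 m a + cross3 n b) n).
Hypotheses (k2'E : k2' = dot3 c n + dot3 b m)
  (k3'E : k3' = dot3 (cross3 p a + cross3 m b + (cross3 m b + cross3 n c)) n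
                + dot3 (cross3 m a + cross3 n b) m).
Let D := k2 * (k3' + k1 * k2) + k3 * (- k2' + k1 * k3).

Let decompose v : v = dot3 v a *: a + dot3 v e *: e + dot3 v n *: n.
Proof. exact: orthonormal_decomposition. Qed.

Let ma : dot3 m a = - k2.
Proof.
by apply/eqP; rewrite -addr_eq0 k2E [dot3 b n]dot3C na_orth'.
Qed.

Let me : dot3 m e = - k3.
Proof. by rewrite k3E; coords; ring. Qed.

Lemma tangent_derivE : b = k1 *: e + k2 *: n.
Proof. by rewrite {1}(decompose b) dot3C ab_orth scale0r add0r -k1E -k2E. Qed.

Lemma normal_derivE : m = (- k2) *: a + (- k3) *: e.
Proof.
by rewrite {1}(decompose m) ma me [dot3 m n]dot3C nm_orth scale0r addr0.
Qed.

Lemma D_normal_jets : D = - k2 * dot3 p e + k3 * dot3 p a.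
Proof.
have bnm : dot3 b (cross3 n m) = - k1 * k2.
  rewrite {1}tangent_derivE dot3Dl !dot3Zl (dot3_cross3_self n m) mulr0 addr0.
  rewrite (dot3_cross3_cycle e) (dot3_cross3_cycle n) (cross3_cross3l n a n).
  by rewrite n_unit [dot3 a n]dot3C na_orth scale1r scale0r subr0 ma mulrN mulNr.
have bm : dot3 b m = - k1 * k3.
  by rewrite {1}tangent_derivE dot3Dl !dot3Zl nm_orth mulr0 addr0 dot3C me; ring.
have pa : dot3 p a = 2 * k1 * k3 - dot3 c n.
  apply/eqP; rewrite -subr_eq0 -na_orth'' [dot3 m b]dot3C bm [dot3 n c]dot3C.
  by apply/eqP; ring.
have k3'_simpl : k3' = - dot3 p e + dot3 b (cross3 n m) by rewrite k3'E; coords; ring.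
by rewrite /D k3'_simpl k2'E bnm bm pa; ring.
Qed.

Local Notation y := (x - q).

Let y_tangent : y = dot3 y a *: a + dot3 y e *: e.
Proof. by rewrite {1}(decompose y) [dot3 y n]dot3Bl osc_n subrr scale0r addr0. Qed.

Lemma osc_offset_coords : D * dot3 y a = - k2 * k3 /\ D * dot3 y e = k2 ^+ 2.
Proof.
have ym : - k2 * dot3 y a - k3 * dot3 y e = 0.
  rewrite -[RHS](_ : dot3 y m = 0); last first.
    by rewrite dot3Bl osc_m addrK dot3C na_orth.
  by rewrite [in dot3 y m]normal_derivE dot3Dr !dot3Zr !mulNr.
have yp : dot3 y a * dot3 p a + dot3 y e * dot3 p e = - k2.
  rewrite -[RHS](_ : dot3 y p = - k2); last first.
    by rewrite dot3Bl osc_p -k2E [dot3 a m]dot3C ma; ring.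
  by rewrite [in dot3 y p]y_tangent [dot3 (_ *: _ + _) p]dot3Dl ![dot3 (_ *: _) p]dot3Zl
    [dot3 a p]dot3C [dot3 e p]dot3C.
rewrite D_normal_jets; split.
- transitivity (k3 * (dot3 y a * dot3 p a + dot3 y e * dot3 p e)
                + dot3 p e * (- k2 * dot3 y a - k3 * dot3 y e)); first by ring.
  by rewrite yp ym; ring.
- transitivity (- k2 * (dot3 y a * dot3 p a + dot3 y e * dot3 p e)
                - dot3 p a * (- k2 * dot3 y a - k3 * dot3 y e)); first by ring.
  by rewrite yp ym; ring.
Qed.

Lemma dist_osc_point : D != 0 -> dist3 q x = `| k2 * Num.sqrt (k2 ^+ 2 + k3 ^+ 2) / D |.
Proof.
move=> D0; have [ya ye] := osc_offset_coords.
have yy : dot3 (q - x) (q - x) = dot3 y a ^+ 2 + dot3 y e ^+ 2.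
  rewrite -opprB dot3Nl dot3Nr opprK {1}y_tangent [dot3 (_ *: _ + _) _]dot3Dl.
  by rewrite ![dot3 (_ *: _) _]dot3Zl ![dot3 _ y]dot3C.
rewrite /dist3 yy -(mulKf D0 (dot3 y a)) -(mulKf D0 (dot3 y e)) ya ye -sqrtr_sqr.
congr Num.sqrt; rewrite !exprMn sqr_sqrtr ?addr_ge0 ?sqr_ge0 //.
by field.
Qed.

Lemma normal_jets_dependent : D = 0 ->
  exists al be ga : R, [|| al != 0, be != 0 | ga != 0] /\ al *: n + be *: m + ga *: p = 0.
Proof.
move=> D0; have [_] := osc_offset_coords.
rewrite D0 mul0r => /esym/eqP; rewrite sqrf_eq0 => /eqP k20.
have [k30|k30] := eqVneq k3 0.
  exists 0, 1, 0; split; first by rewrite oner_eq0 orbT.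
  by rewrite normal_derivE k20 k30 oppr0 !scale0r !scale1r !addr0.
move: D0; rewrite D_normal_jets k20 mulNr mul0r oppr0 add0r => /eqP.
rewrite mulf_eq0 (negbTE k30) /= => /eqP pa0.
exists (- k3 * dot3 p n), (dot3 p e), k3; split; first by rewrite k30 !orbT.
rewrite [X in k3 *: X](decompose p) normal_derivE k20 pa0.
by apply: row3_ext; coords; ring.
Qed.

End PointwiseFrame.

Section RealDerive.
Variable R : realType.
Implicit Types (f g : R -> R) (t df dg c : R).

Lemma derive1_val f t df : is_derive t 1 f df -> derive1 f t = df.
Proof. by move=> Df; rewrite derive1E derive_val. Qed.

Lemma is_derive1D f g t df dg : is_derive t 1 f df -> is_derive t 1 g dg ->
  is_derive t 1 (fun s => f s + g s) (df + dg).
Proof. by move=> Df Dg; have [] := is_deriveD Df Dg; apply: DeriveDef. Qed.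

Lemma is_derive1N f t df : is_derive t 1 f df -> is_derive t 1 (fun s => - f s) (- df).
Proof. by move=> Df; have [] := is_deriveN Df; apply: DeriveDef. Qed.

Lemma is_derive1B f g t df dg : is_derive t 1 f df -> is_derive t 1 g dg ->
  is_derive t 1 (fun s => f s - g s) (df - dg).
Proof. by move=> Df Dg; apply: is_derive1D => //; apply: is_derive1N. Qed.

Lemma is_derive1M f g t df dg : is_derive t 1 f df -> is_derive t 1 g dg ->
  is_derive t 1 (fun s => f s * g s) (df * g t + f t * dg).
Proof.
move=> Df Dg; have [fg_derivable fg_derive] := is_deriveM Df Dg.
by apply: DeriveDef => //; rewrite fg_derive /GRing.scale /=; ring.
Qed.

Lemma is_derive1_div f g t df dg : is_derive t 1 f df -> is_derive t 1 g dg ->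
  g t != 0 -> is_derive t 1 (fun s => f s / g s) ((df * g t - f t * dg) / (g t * g t)).
Proof.
move=> Df [g_derivable g_derive] gt_neq0.
have Dg_inv : is_derive t 1 (fun s => (g s)^-1) (- dg / (g t * g t)).
  apply: DeriveDef; first exact: derivableV.
  by rewrite deriveV // g_derive /GRing.scale /= expr2 invfM; ring.
by apply: is_derive_eq (is_derive1M Df Dg_inv) _; field.
Qed.

Lemma is_derive_cst_eq0 f t df c : is_derive t 1 f df -> (forall s, f s = c) -> df = 0.
Proof.
move=> [_ <-] fc; rewrite (_ : f = cst c); last exact/funext.
exact: derive_cst.
Qed.

End RealDerive.

Section RowDerive.
Variable R : realType.

Definition row_derive n (t : R) (u : R -> 'rV[R]_n) (du : 'rV[R]_n) :=
  forall i, is_derive t (1 : R) (fun s => u s ord0 i) (du ord0 i).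

Lemma row_derive1 n t (u : R -> 'rV[R]_n) du : row_derive t u du -> derive1 u t = du.
Proof.
move=> Du; have u_derivable : derivable u t 1.
  by apply/derivable_mxP => i j; rewrite (ord1 i); exact: ex_derive.
rewrite derive1E derive_mx //; apply/matrixP => i j.
by rewrite mxE (ord1 i); exact: derive_val.
Qed.

Lemma smooth_row_derive n (u : R -> 'rV[R]_n) k t :
  smooth_fun u -> row_derive t (derive1n k u) (derive1n k.+1 u t).
Proof.
move=> su i; have /derivable_mxP/(_ ord0 i) Dui := su k t.
by apply: DeriveDef => //; rewrite derive1nS derive1E derive_mx // mxE.
Qed.

Implicit Types (u v : R -> 'rV[R]_3) (t : R) (du dv : 'rV[R]_3).

Lemma row_derive_add u v t du dv : row_derive t u du -> row_derive t v dv ->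
  row_derive t (fun s => u s + v s) (du + dv).
Proof.
move=> Du Dv i; rewrite coordD.
rewrite (_ : (fun s => _) = fun s => u s ord0 i + v s ord0 i); last first.
  by apply/funext => s; rewrite coordD.
exact: is_derive1D.
Qed.

Lemma row_derive_dot3 u v t du dv : row_derive t u du -> row_derive t v dv ->
  is_derive t 1 (fun s => dot3 (u s) (v s)) (dot3 du (v t) + dot3 (u t) dv).
Proof.
move=> Du Dv; rewrite (_ : (fun s => _) = fun s =>
  u s ord0 i0 * v s ord0 i0 + u s ord0 i1 * v s ord0 i1 + u s ord0 i2 * v s ord0 i2).
  apply: is_derive_eq (is_derive1D (is_derive1D (is_derive1M (Du i0) (Dv i0))
    (is_derive1M (Du i1) (Dv i1))) (is_derive1M (Du i2) (Dv i2))) _.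
  by coords; ring.
by apply/funext => s; rewrite dot3E.
Qed.

Lemma row_derive_cross3 u v t du dv : row_derive t u du -> row_derive t v dv ->
  row_derive t (fun s => cross3 (u s) (v s)) (cross3 du (v t) + cross3 (u t) dv).
Proof.
move=> Du Dv i; rewrite coordD.
have minor j k : (forall w w' : 'rV[R]_3,
    cross3 w w' ord0 i = w ord0 j * w' ord0 k - w ord0 k * w' ord0 j) ->
  is_derive t 1 (fun s => cross3 (u s) (v s) ord0 i)
    (cross3 du (v t) ord0 i + cross3 (u t) dv ord0 i).
  move=> crossE; rewrite !crossE (_ : (fun s => _) = fun s =>
    u s ord0 j * v s ord0 k - u s ord0 k * v s ord0 j); last first.
    by apply/funext => s; rewrite crossE.
  apply: is_derive_eq (is_derive1B (is_derive1M (Du j) (Dv k))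
    (is_derive1M (Du k) (Dv j))) _.
  by ring.
by case: (ord3P i) minor => -> minor;
  [apply: (minor i1 i2); exact: cross3E0 | apply: (minor i2 i0); exact: cross3E1
  | apply: (minor i0 i1); exact: cross3E2].
Qed.

End RowDerive.

Section QuotientJets.
Variable R : realType.

Definition quotient_derive (f g f1 g1 : R -> R) (s : R) :=
  (f1 s * g s - f s * g1 s) / (g s * g s).

Definition quotient_derive2 (f g f1 g1 : R -> R) (f2 g2 s : R) :=
  ((f2 * g s + f1 s * g1 s - (f1 s * g1 s + f s * g2)) * (g s * g s)
   - (f1 s * g s - f s * g1 s) * (g1 s * g s + g s * g1 s)) / ((g s * g s) * (g s * g s)).

Lemma is_derive_quotient_derive (f g f1 g1 : R -> R) (f2 g2 t : R) :
  (forall s : R, is_derive s 1 f (f1 s)) -> (forall s : R, is_derive s 1 g (g1 s)) ->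
  is_derive t 1 f1 f2 -> is_derive t 1 g1 g2 -> g t != 0 ->
  is_derive t 1 (quotient_derive f g f1 g1) (quotient_derive2 f g f1 g1 f2 g2 t).
Proof.
move=> Df Dg Df1 Dg1 gt_neq0.
exact: is_derive1_div (is_derive1B (is_derive1M Df1 (Dg t)) (is_derive1M (Df t) Dg1))
  (is_derive1M (Dg t) (Dg t)) (mulf_neq0 gt_neq0 gt_neq0).
Qed.

(* The relation for f minus f / g times the one for g, expanded through
   f = (f / g) g differentiated twice. *)
Lemma quotient_jets_relation (f g f1 g1 : R -> R) (f2 g2 t al be ga : R) : g t != 0 ->
  al * f t + be * f1 t + ga * f2 = 0 -> al * g t + be * g1 t + ga * g2 = 0 ->
  (be * g t + 2 * ga * g1 t) * quotient_derive f g f1 g1 t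
  + ga * g t * quotient_derive2 f g f1 g1 f2 g2 t = 0.
Proof.
move=> gt_neq0 f_rel g_rel; rewrite /quotient_derive /quotient_derive2.
transitivity ((al * f t + be * f1 t + ga * f2)
  - f t / g t * (al * g t + be * g1 t + ga * g2)).
  by field.
by rewrite f_rel g_rel mulr0 subr0.
Qed.

End QuotientJets.

Section AffineChart.
Variable R : realType.

Definition affine_chart (h : R -> 'rV[R]_4) (j : 'I_4) (t : R) : 'rV[R]_3 :=
  \row_(c < 3) (h t ord0 (lift j c) / h t ord0 j).

Lemma deriv_rank2_indep (phi : R -> 'rV[R]_3) (t u v : R) :
  deriv_rank phi t 2 = 2%N ->
  u *: derive1 phi t + v *: derive1 (derive1 phi) t = 0 -> u = 0 /\ v = 0.
Proof.
move=> rank2 comb.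
pose A := \matrix_(k < 2, c < 3) (derive1n k.+1 phi t) ord0 c.
pose w := \row_(k < 2) (if k == ord0 then u else v).
have freeA : row_free A by apply/eqP.
have /eqP : w *m A = 0.
  rewrite -comb; apply/rowP => c.
  by rewrite !mxE !big_ord_recl big_ord0 !mxE /= addr0.
rewrite (mulmx_free_eq0 _ freeA) => /eqP w0.
have := congr1 (fun r : 'rV_2 => r ord0 ord0) w0.
have := congr1 (fun r : 'rV_2 => r ord0 (lift ord0 ord0)) w0.
by rewrite !mxE.
Qed.

Lemma affine_chart_jets_indep (h h1 : R -> 'rV[R]_4) (h2 : 'rV[R]_4) (j : 'I_4)
    (t al be ga : R) :
  (forall s, row_derive s h (h1 s)) -> row_derive t h1 h2 -> h t ord0 j != 0 ->
  deriv_rank (affine_chart h j) t 2 = 2%N ->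
  al *: h t + be *: h1 t + ga *: h2 = 0 -> [/\ al = 0, be = 0 & ga = 0].
Proof.
move=> Dh Dh1 hj rank2 comb.
pose hc i s := h s ord0 i; pose h1c i s := h1 s ord0 i.
have comb_coord i : al * hc i t + be * h1c i t + ga * h2 ord0 i = 0.
  by have := congr1 (fun r : 'rV_4 => r ord0 i) comb; rewrite !mxE.
pose Q s := \row_c quotient_derive (hc (lift j c)) (hc j) (h1c (lift j c)) (h1c j) s.
pose Q2 := \row_c quotient_derive2 (hc (lift j c)) (hc j) (h1c (lift j c)) (h1c j)
  (h2 ord0 (lift j c)) (h2 ord0 j) t.
have D1 s : hc j s != 0 -> row_derive s (affine_chart h j) (Q s).
  move=> hjs c; rewrite mxE (_ : (fun u => _) = fun u => hc (lift j c) u / hc j u).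
    exact: is_derive1_div (Dh s _) (Dh s _) hjs.
  by apply/funext => u; rewrite mxE.
have near_j : \forall s \near t, hc j s != 0.
  have /derivable1_diffP/differentiable_continuous hj_cont : derivable (hc j) t 1.
    by case: (Dh t j).
  exact: cvgr_neq0 hj_cont hj.
have D2 : row_derive t (derive1 (affine_chart h j)) Q2.
  move=> c; rewrite mxE.
  apply: near_eq_is_derive (is_derive_quotient_derive (Dh^~ _) (Dh^~ _) (Dh1 _) (Dh1 _) hj).
  near=> s; rewrite (row_derive1 (D1 s _)) ?mxE //; near: s; exact: near_j.
have := deriv_rank2_indep (u := be * hc j t + 2 * ga * h1c j t) (v := ga * hc j t) rank2.
rewrite (row_derive1 (D1 t hj)) (row_derive1 D2) => /(_ _)[].
  by apply/rowP => c; rewrite !mxE; apply: quotient_jets_relation.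
move=> /eqP u0 /eqP v0.
have ga0 : ga = 0 by move: v0; rewrite mulf_eq0 (negbTE hj) orbF => /eqP.
have be0 : be = 0.
  by move: u0; rewrite ga0 !(mulr0, mul0r) addr0 mulf_eq0 (negbTE hj) orbF => /eqP.
have /eqP := comb_coord j; rewrite be0 ga0 !mul0r !addr0 mulf_eq0 (negbTE hj) orbF.
by move=> /eqP.
Unshelve. all: by end_near.
Qed.

End AffineChart.

Section HomogeneousLift.
Variable R : realType.

Definition hom_lift (w : R) (v : 'rV[R]_3) : 'rV[R]_4 :=
  \row_(i < 4) (if i == ord0 then w else v ord0 (inord i.-1)).

Lemma row_derive_hom_lift (w : R -> R) (v : R -> 'rV[R]_3) (t dw : R) dv :
  is_derive t 1 w dw -> row_derive t v dv ->
  row_derive t (fun s => hom_lift (w s) (v s)) (hom_lift dw dv).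
Proof.
move=> Dw Dv i; rewrite mxE.
rewrite (_ : (fun s => _) = fun s => if i == ord0 then w s else v s ord0 (inord i.-1)).
  by case: (i == ord0).
by apply/funext => s; rewrite mxE.
Qed.

Lemma hom_lift_comb_eq0 (al be ga w0 w1 w2 : R) (v0 v1 v2 : 'rV[R]_3) :
  al * w0 + be * w1 + ga * w2 = 0 -> al *: v0 + be *: v1 + ga *: v2 = 0 ->
  al *: hom_lift w0 v0 + be *: hom_lift w1 v1 + ga *: hom_lift w2 v2 = 0.
Proof.
move=> w_comb v_comb; apply/rowP => i; rewrite !mxE; case: (i == ord0) => //.
by have := congr1 (fun u : 'rV_3 => u ord0 (inord i.-1)) v_comb; rewrite !mxE.
Qed.

End HomogeneousLift.

Definition osc_det (R : realType) (gamma nn : R -> 'rV[R]_3) (t : R) : R :=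
  kappa2 gamma nn t
    * (derive1 (kappa3 gamma nn) t + kappa1 gamma nn t * kappa2 gamma nn t)
  + kappa3 gamma nn t
    * (- derive1 (kappa2 gamma nn) t + kappa1 gamma nn t * kappa3 gamma nn t).

Section DualBoundary.
Variable R : realType.
Variables gamma nn : R -> 'rV[R]_3.
Hypotheses (gamma_smooth : smooth_fun gamma) (nn_smooth : smooth_fun nn).

Local Notation G k := (derive1n k gamma).
Local Notation N k := (derive1n k nn).

Hypothesis unit_speed : forall t, dot3 (G 1 t) (G 1 t) = 1.
Hypothesis nn_unit : forall t, dot3 (nn t) (nn t) = 1.
Hypothesis nn_tangent : forall t, dot3 (nn t) (G 1 t) = 0.

Let DG k t : row_derive t (G k) (G k.+1 t). Proof. exact: smooth_row_derive. Qed.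
Let DN k t : row_derive t (N k) (N k.+1 t). Proof. exact: smooth_row_derive. Qed.
Let Dgamma t : row_derive t gamma (G 1 t). Proof. exact: DG 0 t. Qed.
Let Dnn t : row_derive t nn (N 1 t). Proof. exact: DN 0 t. Qed.

Lemma tangent_second_orth t : dot3 (G 1 t) (G 2 t) = 0.
Proof.
have := is_derive_cst_eq0 (row_derive_dot3 (DG 1 t) (DG 1 t)) unit_speed.
by rewrite [dot3 (G 2 t) _]dot3C; lra.
Qed.

Lemma normal_deriv_orth t : dot3 (nn t) (N 1 t) = 0.
Proof.
have := is_derive_cst_eq0 (row_derive_dot3 (Dnn t) (Dnn t)) nn_unit.
by rewrite [dot3 (N 1 t) _]dot3C; lra.
Qed.

Lemma normal_tangent_orth1 t : dot3 (N 1 t) (G 1 t) + dot3 (nn t) (G 2 t) = 0.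
Proof. exact: is_derive_cst_eq0 (row_derive_dot3 (Dnn t) (DG 1 t)) nn_tangent. Qed.

Lemma normal_tangent_orth2 t : dot3 (N 2 t) (G 1 t) + dot3 (N 1 t) (G 2 t)
  + (dot3 (N 1 t) (G 2 t) + dot3 (nn t) (G 3 t)) = 0.
Proof.
exact: is_derive_cst_eq0 (is_derive1D (row_derive_dot3 (DN 1 t) (DG 1 t))
  (row_derive_dot3 (Dnn t) (DG 2 t))) normal_tangent_orth1.
Qed.

Lemma kappa1E t : kappa1 gamma nn t = dot3 (G 2 t) (cross3 (nn t) (G 1 t)).
Proof. by []. Qed.

Lemma kappa2E t : kappa2 gamma nn t = dot3 (G 2 t) (nn t).
Proof. by []. Qed.

Lemma kappa3E t : kappa3 gamma nn t =
  dot3 (cross3 (N 1 t) (G 1 t) + cross3 (nn t) (G 2 t)) (nn t).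
Proof. by rewrite /kappa3 (row_derive1 (row_derive_cross3 (Dnn t) (DG 1 t))). Qed.

Lemma derive1_kappa2 t :
  derive1 (kappa2 gamma nn) t = dot3 (G 3 t) (nn t) + dot3 (G 2 t) (N 1 t).
Proof. exact: derive1_val (row_derive_dot3 (DG 2 t) (Dnn t)). Qed.

Lemma derive1_kappa3 t : derive1 (kappa3 gamma nn) t =
  dot3 (cross3 (N 2 t) (G 1 t) + cross3 (N 1 t) (G 2 t)
        + (cross3 (N 1 t) (G 2 t) + cross3 (nn t) (G 3 t))) (nn t)
  + dot3 (cross3 (N 1 t) (G 1 t) + cross3 (nn t) (G 2 t)) (N 1 t).
Proof.
rewrite (_ : kappa3 gamma nn = fun s =>
  dot3 (cross3 (N 1 s) (G 1 s) + cross3 (nn s) (G 2 s)) (nn s)).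
  exact: derive1_val (row_derive_dot3 (row_derive_add (row_derive_cross3 (DN 1 t) (DG 1 t))
    (row_derive_cross3 (Dnn t) (DG 2 t))) (Dnn t)).
exact/funext/kappa3E.
Qed.

Let Dg (t : R) : is_derive t 1 (fun s => dot3 (gamma s) (nn s))
  (dot3 (G 1 t) (nn t) + dot3 (gamma t) (N 1 t)).
Proof. exact: row_derive_dot3. Qed.

Let Dg1 (t : R) : is_derive t 1 (fun s => dot3 (G 1 s) (nn s) + dot3 (gamma s) (N 1 s))
  (dot3 (G 2 t) (nn t) + dot3 (G 1 t) (N 1 t)
   + (dot3 (G 1 t) (N 1 t) + dot3 (gamma t) (N 2 t))).
Proof.
exact: is_derive1D (row_derive_dot3 (DG 1 t) (Dnn t)) (row_derive_dot3 (Dgamma t) (DN 1 t)).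
Qed.

Lemma dual_osc_pointE t x : dual_osc_point gamma nn t x ->
  [/\ dot3 x (nn t) = dot3 (gamma t) (nn t),
      dot3 x (N 1 t) = dot3 (G 1 t) (nn t) + dot3 (gamma t) (N 1 t) &
      dot3 x (N 2 t) = dot3 (G 2 t) (nn t) + dot3 (G 1 t) (N 1 t)
                       + (dot3 (G 1 t) (N 1 t) + dot3 (gamma t) (N 2 t))].
Proof.
case=> osc0 osc1 osc2; split => //; first by rewrite osc1 (derive1_val (Dg t)).
rewrite osc2 derive1nS derive1n1 (_ : derive1 (fun s => dot3 (gamma s) (nn s)) =
  fun s => dot3 (G 1 s) (nn s) + dot3 (gamma s) (N 1 s)).
  exact: derive1_val (Dg1 t).
by apply/funext => s; exact: derive1_val (Dg s).
Qed.

Lemma dual_normal_jets_indep t j x (al be ga : R) :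
  dual_boundary_hom gamma nn t ord0 j != 0 ->
  deriv_rank (dual_boundary_affine gamma nn j) t 2 = 2%N ->
  dual_osc_point gamma nn t x ->
  al *: nn t + be *: N 1 t + ga *: N 2 t = 0 -> [/\ al = 0, be = 0 & ga = 0].
Proof.
move=> hj rank2 /dual_osc_pointE[osc0 osc1 osc2] normal_rel.
have hom_rel : al * - dot3 (gamma t) (nn t)
    + be * - (dot3 (G 1 t) (nn t) + dot3 (gamma t) (N 1 t))
    + ga * - (dot3 (G 2 t) (nn t) + dot3 (G 1 t) (N 1 t)
              + (dot3 (G 1 t) (N 1 t) + dot3 (gamma t) (N 2 t))) = 0.
  have := congr1 (dot3 x) normal_rel.
  rewrite dot3r0 !dot3Dr !dot3Zr osc0 osc1 osc2 => dual_rel.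
  by rewrite !mulrN -!opprD dual_rel oppr0.
(* [dual_boundary_hom gamma nn s] is [hom_lift (- dot3 (gamma s) (nn s)) (nn s)]
   by definition, and its affine charts are those of [affine_chart]. *)
apply: (affine_chart_jets_indep (h := dual_boundary_hom gamma nn)
  (h1 := fun s => hom_lift (- (dot3 (G 1 s) (nn s) + dot3 (gamma s) (N 1 s))) (N 1 s))
  _ _ hj rank2 (hom_lift_comb_eq0 hom_rel normal_rel)).
- by move=> s; apply: row_derive_hom_lift (is_derive1N (Dg s)) (Dnn s).
- exact: row_derive_hom_lift (is_derive1N (Dg1 t)) (DN 1 t).
Qed.

Lemma osc_det_neq0 t j x :
  dual_boundary_hom gamma nn t ord0 j != 0 ->
  deriv_rank (dual_boundary_affine gamma nn j) t 2 = 2%N ->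
  dual_osc_point gamma nn t x -> osc_det gamma nn t != 0.
Proof.
move=> hj rank2 osc; have [osc0 osc1 osc2] := dual_osc_pointE osc.
apply/eqP; rewrite /osc_det.
move=> /(normal_jets_dependent (unit_speed t) (tangent_second_orth t) (nn_unit t)
  (normal_deriv_orth t) (nn_tangent t) (normal_tangent_orth1 t) (normal_tangent_orth2 t)
  osc0 osc1 osc2 (kappa1E t) (kappa2E t) (kappa3E t) (derive1_kappa2 t) (derive1_kappa3 t)).
case=> [al [be [ga [nontrivial rel]]]].
have [al0 be0 ga0] := dual_normal_jets_indep hj rank2 osc rel.
by move: nontrivial; rewrite al0 be0 ga0 eqxx.
Qed.

Lemma dual_osc_point_dist t x :
  dual_osc_point gamma nn t x -> osc_det gamma nn t != 0 ->
  dist3 (gamma t) x = `| kappa2 gamma nn t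
     * Num.sqrt (kappa2 gamma nn t ^+ 2 + kappa3 gamma nn t ^+ 2) / osc_det gamma nn t |.
Proof.
case/dual_osc_pointE => osc0 osc1 osc2; rewrite /osc_det.
have dist := dist_osc_point (unit_speed t) (tangent_second_orth t) (nn_unit t)
  (normal_deriv_orth t) (nn_tangent t) (normal_tangent_orth1 t) (normal_tangent_orth2 t)
  osc0 osc1 osc2 (kappa1E t) (kappa2E t) (kappa3E t) (derive1_kappa2 t) (derive1_kappa3 t).
exact: dist.
Qed.

End DualBoundary.

Theorem proposition3p6 (R : realType) (gamma nn : R -> 'rV[R]_3) (t1 : R) (r : nat) :
  smooth_fun gamma -> smooth_fun nn ->
  (forall t, dot3 (derive1 gamma t) (derive1 gamma t) = 1) ->
  (forall t, dot3 (nn t) (nn t) = 1) ->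
  (forall t, dot3 (nn t) (derive1 gamma t) = 0) ->
  (0 < r)%N ->
  dual_boundary_type gamma nn t1 1 2 (2 + r) ->
  forall x : 'rV[R]_3, dual_osc_point gamma nn t1 x ->
  let k1 := kappa1 gamma nn t1 in
  let k2 := kappa2 gamma nn t1 in
  let k3 := kappa3 gamma nn t1 in
  let k2' := derive1 (kappa2 gamma nn) t1 in
  let k3' := derive1 (kappa3 gamma nn) t1 in
  let D := k2 * (k3' + k1 * k2) + k3 * (- k2' + k1 * k3) in
  D != 0 /\
  dist3 (gamma t1) x = `| k2 * Num.sqrt (k2 ^+ 2 + k3 ^+ 2) / D |.
Proof.
move=> gamma_smooth nn_smooth unit_speed nn_unit nn_tangent _
  [j [hj [_ [[rank2 _] _]]]] x osc k1 k2 k3 k2' k3' D.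
have D_neq0 :=
  osc_det_neq0 gamma_smooth nn_smooth unit_speed nn_unit nn_tangent hj rank2 osc.
have dist :=
  dual_osc_point_dist gamma_smooth nn_smooth unit_speed nn_unit nn_tangent osc D_neq0.
by split.
Qed.
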